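(* Every $\Sigma^1_1\text{-}\mathrm{KROM}^r$ formula is equivalent (on all finite structures) to a formula of the form $\exists\bar{y}_1\phi_1\vee\cdots\vee\exists\bar{y}_n\phi_n$, where each $\phi_i$ ($1\le i\le n$) is a $\Sigma^1_1\text{-}\mathrm{KROM}$ formula (possibly with free first-order variables $\bar{y}_i$).
   Context: All structures are finite; every vocabulary contains equality. For a vocabulary $\tau$, an SO-KROM$^r(\tau)$ formula is a second-order formula of the form $Q_1R_1\cdots Q_mR_m\forall\bar{x}(C_1\wedge\cdots\wedge C_n)$, where each $Q_i\in\{\forall,\exists\}$, $R_1,\dots,R_m$ are second-order relation variables, and each clause $C_j$ is a disjunction $\beta_1\vee\cdots\vee\beta_q\vee H_1\vee H_2$ in which each $\beta_s$ is an atomic or negated atomic $\tau$-formula ($P\bar{y}$ or $\neg P\bar{y}$, $P\in\tau$, including equality), and each $H_t$ is one of $R_i\bar{z}$, $\neg R_i\bar{z}$, $\exists z_1\cdots\exists z_{r}R_i z_1\dots z_r$ ($r$ the arity of $R_i$), or $\bot$. SO-KROM is the same without the option $\exists z_1\cdots\exists z_rR_iz_1\dots z_r$ for $H_t$. $\Sigma^1_1\text{-}\mathrm{KROM}^r$ (resp. $\Sigma^1_1\text{-}\mathrm{KROM}$) consists of those SO-KROM$^r$ (resp. SO-KROM) formulas all of whose second-order quantifiers are existential. *)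

From Stdlib Require List.
From mathcomp Require Import all_boot.
Set Implicit Arguments. Unset Strict Implicit. Unset Printing Implicit Defensive.

(* A vocabulary tau is a list of arities: relation symbol P_j (j < size tau)
   has arity nth 0 tau j.
   Second-order variables R_i are referred to by their position i in the
   quantifier prefix of the formula, so they are automatically distinct
   and bound. *)

Inductive tlit :=
| TAtom (pos : bool) (j : nat) (ys : seq nat)
| TEq (pos : bool) (y1 y2 : nat).

Inductive hlit :=
| HAtom (pos : bool) (i : nat) (zs : seq nat)
| HEx (i : nat)
| HBot.

Record clause := Clause { cl_betas : seq tlit; cl_H1 : hlit; cl_H2 : hlit }.

(* Q1 R1 ... Qm Rm forall xbar (C1 /\ ... /\ Cn);
   prefix entries are (is_existential, arity of R_i). *)
Record soformula := SOF {
  prefix : seq (bool * nat);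
  fovars : seq nat;
  clauses : seq clause }.

Definition so_arity (f : soformula) (i : nat) : nat := nth 0 (map snd (prefix f)) i.

Definition wf_tlit (tau : seq nat) (l : tlit) : bool :=
  match l with
  | TAtom _ j ys => (j < size tau) && (size ys == nth 0 tau j)
  | TEq _ _ _ => true
  end.

Definition wf_hlit (f : soformula) (h : hlit) : bool :=
  match h with
  | HAtom _ i zs => (i < size (prefix f)) && (size zs == so_arity f i)
  | HEx i => i < size (prefix f)
  | HBot => true
  end.

Definition wf_clause (tau : seq nat) (f : soformula) (c : clause) : bool :=
  all (wf_tlit tau) (cl_betas c) && wf_hlit f (cl_H1 c) && wf_hlit f (cl_H2 c).

Definition is_SO_KROMr (tau : seq nat) (f : soformula) : bool :=
  all (wf_clause tau f) (clauses f).

Definition not_HEx (h : hlit) : bool := if h is HEx _ then false else true.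

Definition is_SO_KROM (tau : seq nat) (f : soformula) : bool :=
  is_SO_KROMr tau f &&
  all (fun c => not_HEx (cl_H1 c) && not_HEx (cl_H2 c)) (clauses f).

Definition is_Sigma11 (f : soformula) : bool := all fst (prefix f).

Definition is_Sigma11_KROMr tau f := is_SO_KROMr tau f && is_Sigma11 f.
Definition is_Sigma11_KROM tau f := is_SO_KROM tau f && is_Sigma11 f.

(* A tau-structure: a finite domain A with interpretation I j of symbol P_j
   (only tuples of the right length matter). *)
Section Semantics.
Variables (A : finType) (I : nat -> seq A -> bool).

Definition upd {X} (s : nat -> X) (x : nat) (a : X) : nat -> X :=
  fun y => if y == x then a else s y.

Fixpoint forall_vars (xs : seq nat) (s : nat -> A) (P : (nat -> A) -> Prop) : Prop :=
  match xs with
  | [::] => P s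
  | x :: xs' => forall a : A, forall_vars xs' (upd s x a) P
  end.

Fixpoint exists_vars (xs : seq nat) (s : nat -> A) (P : (nat -> A) -> Prop) : Prop :=
  match xs with
  | [::] => P s
  | x :: xs' => exists a : A, exists_vars xs' (upd s x a) P
  end.

Definition eval_tlit (s : nat -> A) (l : tlit) : bool :=
  match l with
  | TAtom b j ys => I j (map s ys) == b
  | TEq b y1 y2 => (s y1 == s y2) == b
  end.

Definition eval_hlit (f : soformula) (rho : nat -> seq A -> Prop) (s : nat -> A)
  (h : hlit) : Prop :=
  match h with
  | HAtom b i zs => if b then rho i (map s zs) else ~ rho i (map s zs)
  | HEx i => exists t : seq A, size t = so_arity f i /\ rho i t
  | HBot => False
  end.

Definition sat_clause f rho s (c : clause) : Prop :=
  List.Exists (fun l => eval_tlit s l) (cl_betas c)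
  \/ eval_hlit f rho s (cl_H1 c) \/ eval_hlit f rho s (cl_H2 c).

Fixpoint sat_prefix (pre : seq (bool * nat)) (i : nat) (rho : nat -> seq A -> Prop)
  (body : (nat -> seq A -> Prop) -> Prop) : Prop :=
  match pre with
  | [::] => body rho
  | (q, _) :: pre' =>
      if q then exists R : seq A -> Prop, sat_prefix pre' i.+1 (upd rho i R) body
      else forall R : seq A -> Prop, sat_prefix pre' i.+1 (upd rho i R) body
  end.

Definition sat (f : soformula) (s : nat -> A) : Prop :=
  sat_prefix (prefix f) 0 (fun _ _ => False)
    (fun rho => forall_vars (fovars f) s
       (fun s' => forall c, List.In c (clauses f) -> sat_clause f rho s' c)).

End Semantics.

From Pilot Require Import Defs.
From mathcomp Require Import all_boot zify.
From Stdlib Require List.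
From Stdlib Require Import Classical ClassicalEpsilon FunctionalExtensionality.

Set Implicit Arguments. Unset Strict Implicit. Unset Printing Implicit Defensive.

(* Since all second-order quantifiers are existential, each disjunct
   [exists z, R_i z] can be replaced by [R_i y_i] for a tuple y_i of fresh
   first-order variables, existentially quantified in front of the formula:
   given the relations, take for y_i a tuple of R_i if R_i is nonempty (and
   any tuple of the nonempty domain otherwise).  So a single disjunct
   suffices. *)

Section Assignments.
Variable A : finType.

Definition agree_off (xs : seq nat) (s' s : nat -> A) : Prop :=
  forall y, y \notin xs -> s' y = s y.

Lemma exists_varsP xs (s : nat -> A) P :
  exists_vars xs s P <-> exists s', agree_off xs s' s /\ P s'.
Proof.
elim: xs s => [|x xs IH] s /=.
  split=> [HP | [s' [Hs' HP]]]; first by exists s.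
  by have -> : s = s' by apply: functional_extensionality => y; rewrite Hs'.
split=> [[a /IH [s' [Hs' HP]]] | [s' [Hs' HP]]].
  exists s'; split=> // y; rewrite in_cons negb_or => /andP[Hx Hy].
  by rewrite Hs' // /upd (negbTE Hx).
exists (s' x); apply/IH; exists s'; split=> // y Hy.
rewrite /upd; case: eqP => [-> // | /eqP Hx].
by apply: Hs'; rewrite in_cons negb_or Hx.
Qed.

Lemma forall_varsP xs (s : nat -> A) P :
  forall_vars xs s P <-> forall s', agree_off xs s' s -> P s'.
Proof.
elim: xs s => [|x xs IH] s /=.
  split=> [HP s' Hs' | H]; last exact: H.
  by have -> : s' = s by apply: functional_extensionality => y; rewrite Hs'.
split=> [H s' Hs' | H a].
  have /IH := H (s' x); apply=> y Hy.
  rewrite /upd; case: eqP => [-> // | /eqP Hx].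
  by apply: Hs'; rewrite in_cons negb_or Hx.
apply/IH => s' Hs'; apply: H => y; rewrite in_cons negb_or => /andP[Hx Hy].
by rewrite Hs' // /upd (negbTE Hx).
Qed.

Lemma sat_prefix_iff pre i (rho : nat -> seq A -> Prop) (P Q : _ -> Prop) :
  (forall r, P r <-> Q r) -> sat_prefix pre i rho P <-> sat_prefix pre i rho Q.
Proof.
elim: pre i rho => [|[[] n] pre IH] i rho PQ /=; first exact: PQ.
  by split=> -[R H]; exists R; apply/IH.
by split=> H R; apply/IH.
Qed.

Lemma sat_prefix_exists (X : Type) pre i (rho : nat -> seq A -> Prop)
    (P : X -> (nat -> seq A -> Prop) -> Prop) :
  all fst pre ->
  sat_prefix pre i rho (fun r => exists x, P x r) <->
  exists x, sat_prefix pre i rho (P x).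
Proof.
elim: pre i rho => [|[[] n] pre IH] i rho //= Hpre.
split=> [[R /IH [] // x H] | [x [R H]]]; first by exists x, R.
by exists R; apply/IH => //; exists x.
Qed.

Lemma sat_prefix_exists_vars pre i (rho : nat -> seq A -> Prop) xs s
    (P : (nat -> seq A -> Prop) -> (nat -> A) -> Prop) :
  all fst pre ->
  sat_prefix pre i rho (fun r => exists_vars xs s (P r)) <->
  exists_vars xs s (fun s' => sat_prefix pre i rho (fun r => P r s')).
Proof.
move=> Hpre; elim: xs s => [|x xs IH] s //=.
rewrite sat_prefix_exists //.
by split=> -[a H]; exists a; apply/IH.
Qed.

End Assignments.

Definition tlit_vars (l : tlit) : seq nat :=
  match l with TAtom _ _ ys => ys | TEq _ y1 y2 => [:: y1; y2] end.

Definition hlit_vars (h : hlit) : seq nat :=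
  match h with HAtom _ _ zs => zs | _ => [::] end.

Definition clause_vars (c : clause) : seq nat :=
  flatten (map tlit_vars (cl_betas c)) ++ hlit_vars (cl_H1 c) ++ hlit_vars (cl_H2 c).

Definition var_bound (f : soformula) : nat :=
  (\max_(y <- fovars f ++ flatten (map clause_vars (clauses f))) y).+1.

Lemma mem_flatten_map_In (X : Type) (g : X -> seq nat) x xs y :
  List.In x xs -> y \in g x -> y \in flatten (map g xs).
Proof.
elim: xs => [|z zs IH] //= [-> | Hx] Hy; rewrite mem_cat ?Hy //.
by rewrite IH ?orbT.
Qed.

Lemma fovars_lt_bound f y : y \in fovars f -> y < var_bound f.
Proof. by move=> Hy; rewrite ltnS (leq_bigmax_seq y) // mem_cat Hy. Qed.

Lemma clause_vars_lt_bound f c y :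
  List.In c (clauses f) -> y \in clause_vars c -> y < var_bound f.
Proof.
move=> Hc Hy; rewrite ltnS (leq_bigmax_seq y) //.
by rewrite mem_cat (mem_flatten_map_In Hc Hy) orbT.
Qed.

Lemma agree_clause_hlits (A : Type) (s1 s2 : nat -> A) c :
  {in clause_vars c, s1 =1 s2} ->
  {in hlit_vars (cl_H1 c), s1 =1 s2} /\ {in hlit_vars (cl_H2 c), s1 =1 s2}.
Proof. by move=> Hs; split=> y Hy; apply: Hs; rewrite !mem_cat Hy ?orbT. Qed.

Lemma wf_clause_In tau f c :
  is_SO_KROMr tau f -> List.In c (clauses f) -> wf_clause tau f c.
Proof.
rewrite /is_SO_KROMr; elim: (clauses f) => //= c' cs IH /andP[Hc' Hcs].
by case=> [<- // | Hc]; exact: IH.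
Qed.

(* Witness variables of [R_i] occupy the block [var_bound f + i * K + k],
   [k < arity R_i], where [K] exceeds every arity. *)
Definition block_size (f : soformula) : nat := (sumn (map snd (Defs.prefix f))).+1.

Lemma arity_lt_block_size f i : so_arity f i < block_size f.
Proof.
rewrite ltnS /so_arity; elim: (map snd (Defs.prefix f)) i => [|x l IH] [|i] //=.
  exact: leq_addr.
exact: leq_trans (IH i) (leq_addl _ _).
Qed.

Definition witness_vars (f : soformula) (i : nat) : seq nat :=
  [seq var_bound f + (i * block_size f + k) | k <- iota 0 (so_arity f i)].

Definition hex_vars (f : soformula) : seq nat :=
  iota (var_bound f) (size (Defs.prefix f) * block_size f).

Lemma witness_vars_fresh f i y : y \in witness_vars f i -> var_bound f <= y.
Proof. by case/mapP=> k _ ->; exact: leq_addr. Qed.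

Definition elim_hex_hlit (f : soformula) (h : hlit) : hlit :=
  if h is HEx i then HAtom true i (witness_vars f i) else h.

Definition elim_hex_clause (f : soformula) (c : clause) : clause :=
  Clause (cl_betas c) (elim_hex_hlit f (cl_H1 c)) (elim_hex_hlit f (cl_H2 c)).

Definition elim_hex (f : soformula) : soformula :=
  SOF (Defs.prefix f) (fovars f) (map (elim_hex_clause f) (clauses f)).

Lemma wf_elim_hex_hlit f h : wf_hlit f h -> wf_hlit (elim_hex f) (elim_hex_hlit f h).
Proof. by case: h => //= i ->; rewrite /witness_vars size_map size_iota eqxx. Qed.

Lemma elim_hex_Sigma11_KROM tau f :
  is_Sigma11_KROMr tau f -> is_Sigma11_KROM tau (elim_hex f).
Proof.
case/andP=> wf_f Sig_f; apply/andP; split; last exact: Sig_f.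
rewrite /is_SO_KROM /is_SO_KROMr !all_map; apply/andP; split.
  apply: sub_all wf_f => c /andP[/andP[Hb H1] H2].
  by rewrite /= /wf_clause /= Hb !wf_elim_hex_hlit.
by elim: (clauses f) => //= c cs ->; case: (cl_H1 c); case: (cl_H2 c).
Qed.

Section Semantics.
Variables (A : finType) (I : nat -> seq A -> bool).

Definition matrix_sat (f : soformula) (r : nat -> seq A -> Prop) (s : nat -> A) : Prop :=
  forall_vars (fovars f) s
    (fun s' => forall c, List.In c (clauses f) -> sat_clause I f r s' c).

Definition block_assign (a0 : A) (N K n : nat) (W : nat -> seq A) (s : nat -> A)
    (y : nat) : A :=
  if y \in iota N (n * K) then nth a0 (W ((y - N) %/ K)) ((y - N) %% K) else s y.

Lemma map_block_assign a0 N K n W s i :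
  i < n -> size (W i) < K ->
  map (block_assign a0 N K n W s) [seq N + (i * K + k) | k <- iota 0 (size (W i))]
  = W i.
Proof.
move=> Hi HWK; rewrite -map_comp -[RHS](mkseq_nth a0); apply/eq_in_map => k.
rewrite mem_iota add0n => /andP[_ Hk] /=.
have HK : 0 < K by case: K HWK.
have HiK : i.+1 * K <= n * K by rewrite leq_mul2r Hi orbT.
rewrite /block_assign mem_iota leq_addr ltn_add2l addKn.
have -> : i * K + k < n * K by rewrite mulSn in HiK; lia.
by rewrite divnMDl // modnMDl divn_small ?modn_small ?addn0 //; lia.
Qed.

Lemma hex_witness_assign f r (a0 : A) s :
  exists s'' : nat -> A, agree_off (hex_vars f) s'' s /\
    forall i, i < size (Defs.prefix f) ->
      (exists t, size t = so_arity f i /\ r i t) -> r i (map s'' (witness_vars f i)).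
Proof.
have HW i : exists w : seq A, size w = so_arity f i /\
    ((exists t, size t = so_arity f i /\ r i t) -> r i w).
  case: (classic (exists t, size t = so_arity f i /\ r i t)).
    by case=> t [Ht Hrt]; exists t.
  by move=> Hn; exists (nseq (so_arity f i) a0); rewrite size_nseq.
have [W {}HW] := choice _ HW.
exists (block_assign a0 (var_bound f) (block_size f) (size (Defs.prefix f)) W s).
split=> [y /negbTE Hy | i Hi /(HW i).2]; first by rewrite /block_assign Hy.
have [Hsz _] := HW i.
by rewrite /witness_vars -Hsz map_block_assign // Hsz arity_lt_block_size.
Qed.

Lemma eval_tlit_agree (s1 s2 : nat -> A) l :
  {in tlit_vars l, s1 =1 s2} -> eval_tlit I s1 l = eval_tlit I s2 l.
Proof.
case: l => [b j ys | b y1 y2] /= Hs; first by move/eq_in_map: Hs => ->.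
by rewrite !Hs ?mem_head // in_cons mem_head orbT.
Qed.

Lemma Exists_eval_tlit_agree (s1 s2 : nat -> A) c :
  {in clause_vars c, s1 =1 s2} ->
  List.Exists (eval_tlit I s1) (cl_betas c) -> List.Exists (eval_tlit I s2) (cl_betas c).
Proof.
move=> Hs; rewrite !List.Exists_exists => -[l [Hl Hsl]]; exists l; split=> //.
rewrite -(eval_tlit_agree (s1:=s1)) // => y Hy.
by apply: Hs; rewrite mem_cat (mem_flatten_map_In Hl Hy).
Qed.

Section Clause.
Variables (f : soformula) (r : nat -> seq A -> Prop).

Lemma eval_elim_hex_hlit (s1 s2 : nat -> A) h :
  wf_hlit f h -> {in hlit_vars h, s1 =1 s2} ->
  (forall i, i < size (Defs.prefix f) ->
     (exists t, size t = so_arity f i /\ r i t) -> r i (map s2 (witness_vars f i))) ->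
  eval_hlit f r s1 h -> eval_hlit (elim_hex f) r s2 (elim_hex_hlit f h).
Proof.
case: h => [b i zs | i |] //= Hwf Hs Hwit; last exact: Hwit.
by move/eq_in_map: Hs => ->.
Qed.

Lemma eval_hlit_of_elim_hex (s1 s2 : nat -> A) h :
  {in hlit_vars h, s1 =1 s2} ->
  eval_hlit (elim_hex f) r s2 (elim_hex_hlit f h) -> eval_hlit f r s1 h.
Proof.
case: h => [b i zs | i |] //= Hs; first by move/eq_in_map: Hs => ->.
by move=> Hr; exists (map s2 (witness_vars f i)); rewrite /witness_vars !size_map size_iota.
Qed.

Lemma sat_elim_hex_clause tau (s1 s2 : nat -> A) c :
  wf_clause tau f c -> {in clause_vars c, s1 =1 s2} ->
  (forall i, i < size (Defs.prefix f) ->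
     (exists t, size t = so_arity f i /\ r i t) -> r i (map s2 (witness_vars f i))) ->
  sat_clause I f r s1 c -> sat_clause I (elim_hex f) r s2 (elim_hex_clause f c).
Proof.
case/andP=> /andP[_ wf1] wf2 Hs Hwit; have [Hs1 Hs2] := agree_clause_hlits Hs.
case=> [Hb | [H1 | H2]]; [left | right; left | right; right].
- exact: Exists_eval_tlit_agree Hs Hb.
- exact: eval_elim_hex_hlit wf1 Hs1 Hwit H1.
- exact: eval_elim_hex_hlit wf2 Hs2 Hwit H2.
Qed.

Lemma sat_clause_of_elim_hex (s1 s2 : nat -> A) c :
  {in clause_vars c, s1 =1 s2} ->
  sat_clause I (elim_hex f) r s2 (elim_hex_clause f c) -> sat_clause I f r s1 c.
Proof.
move=> Hs; have [Hs1 Hs2] := agree_clause_hlits Hs.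
have Hs' : {in clause_vars c, s2 =1 s1} by move=> y /Hs.
case=> [Hb | [H1 | H2]]; [left | right; left | right; right].
- exact: Exists_eval_tlit_agree Hs' Hb.
- exact: eval_hlit_of_elim_hex Hs1 H1.
- exact: eval_hlit_of_elim_hex Hs2 H2.
Qed.

Lemma matrix_sat_elim_hex tau s (a0 : A) :
  is_SO_KROMr tau f -> matrix_sat f r s ->
  exists_vars (hex_vars f) s (matrix_sat (elim_hex f) r).
Proof.
move=> wf_f; rewrite /matrix_sat forall_varsP => Hf.
have [s'' [Hs'' Hwit]] := hex_witness_assign f r a0 s.
apply/exists_varsP; exists s''; split=> //; apply/forall_varsP.
move=> s2 Hs2 _ /List.in_map_iff [c [<- Hc]].
pose s1 y := if y \in fovars f then s2 y else s y.
have Hs1 : agree_off (fovars f) s1 s by move=> y /negbTE; rewrite /s1 => ->.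
apply: (sat_elim_hex_clause (wf_clause_In wf_f Hc) _ _ (Hf s1 Hs1 c Hc)).
  move=> y /(clause_vars_lt_bound Hc) Hy; rewrite /s1; case: ifPn => // Hyf.
  by rewrite Hs2 // Hs'' // mem_iota leqNgt Hy.
move=> i Hi /(Hwit i Hi); congr (r i _); apply/eq_in_map => y /witness_vars_fresh Hy.
by rewrite Hs2 //; apply/negP => /(@fovars_lt_bound f); lia.
Qed.

Lemma matrix_sat_of_elim_hex s :
  exists_vars (hex_vars f) s (matrix_sat (elim_hex f) r) -> matrix_sat f r s.
Proof.
case/exists_varsP=> s'' [Hs'']; rewrite /matrix_sat !forall_varsP => Hg s1 Hs1 c Hc.
pose s2 y := if y \in fovars f then s1 y else s'' y.
have Hs2 : agree_off (fovars f) s2 s'' by move=> y /negbTE; rewrite /s2 => ->.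
apply: (sat_clause_of_elim_hex _ (Hg s2 Hs2 _ (List.in_map _ _ _ Hc))).
move=> y /(clause_vars_lt_bound Hc) Hy; rewrite /s2; case: ifPn => // Hyf.
by rewrite Hs1 // Hs'' // mem_iota leqNgt Hy.
Qed.

End Clause.

Lemma sat_elim_hex tau f (a0 : A) s :
  is_Sigma11_KROMr tau f ->
  sat I f s <-> exists_vars (hex_vars f) s (sat I (elim_hex f)).
Proof.
case/andP=> wf_f Sig_f.
apply: iff_trans (sat_prefix_exists_vars _ _ _ _ (matrix_sat (elim_hex f)) Sig_f).
apply: sat_prefix_iff => r; split; first exact: (matrix_sat_elim_hex a0 wf_f).
exact: matrix_sat_of_elim_hex.
Qed.

End Semantics.

Theorem proposition2p4 (tau : seq nat) (f : soformula) :
  is_Sigma11_KROMr tau f ->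
  exists ds : seq (seq nat * soformula),
    ds <> [::] /\
    (forall d, List.In d ds -> is_Sigma11_KROM tau d.2) /\
    (forall (A : finType) (I : nat -> seq A -> bool), 0 < #|A| ->
       forall s : nat -> A,
         sat I f s <->
         exists d, List.In d ds /\ exists_vars d.1 s (fun s' => sat I d.2 s')).
Proof.
move=> Hf; exists [:: (hex_vars f, elim_hex f)]; split=> //; split.
  by move=> d [<- | []]; exact: elim_hex_Sigma11_KROM.
move=> A I /card_gt0P [a0 _] s; rewrite (sat_elim_hex I a0 s Hf).
split=> [H | [d [[<- | []] H]]] //.
by exists (hex_vars f, elim_hex f); split; first left.
Qed.
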